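(* Let $\pi_1(K^2)=\langle a,b\mid aba^{-1}=b^{-1}\rangle$ and let $\rho\colon\pi_1(K^2)\to\mathrm{Isom}(\mathbb{H}^3)$ preserve the orientation type with $\rho(b)\neq\mathrm{Id}$. Then: if $\rho$ is parabolic, $I_\gamma(\rho)=0$ for all $\gamma\in\langle a^2,b\rangle$; if $\rho$ is of type I, $I_{a^2}(\rho)\ge0$ and $I_b(\rho)<0$; if $\rho$ is of type II, $I_{a^2}(\rho)\le0$ and $I_b(\rho)>0$.
   Context: $\rho$ preserves the orientation type if $\rho(\gamma)$ is orientation-preserving iff $\gamma$ is an orientation-preserving loop of $K^2$ (so $\rho(a)$ reverses and $\rho(b)$ preserves orientation). Such $\rho$ with $\rho(b)\ne\mathrm{Id}$ is conjugate, as transformations $A=\rho(a)$, $B=\rho(b)$ of $\mathbb{C}\cup\{\infty\}$, to one of: parabolic: $A(z)=\overline z+1$ or $A(z)=\overline z$, with $B(z)=z+\tau i$, $\tau>0$; type I: $A(z)=e^{l}\overline z$, $B(z)=e^{\alpha i}z$, $l\ge0$, $\alpha\in(0,\pi]$; type II: $A(z)=e^{\alpha i}/\overline z$, $B(z)=e^{l}z$, $l>0$, $\alpha\in[0,\pi]$. For $\gamma$ in the orientation subgroup $\langle a^2,b\rangle$, $I_\gamma(\rho)=(\mathrm{trace}_{\mathrm{PSL}(2,\mathbb{C})}\rho(\gamma))^2-4$. *)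

From Stdlib Require Import Reals List.
From Coquelicot Require Import Coquelicot.
Import ListNotations.
Open Scope C_scope.

Record Mat := mkMat { m11 : C; m12 : C; m21 : C; m22 : C }.

Definition mmul (M N : Mat) : Mat :=
  mkMat (m11 M * m11 N + m12 M * m21 N) (m11 M * m12 N + m12 M * m22 N)
        (m21 M * m11 N + m22 M * m21 N) (m21 M * m12 N + m22 M * m22 N).
Definition mconj (M : Mat) : Mat :=
  mkMat (Cconj (m11 M)) (Cconj (m12 M)) (Cconj (m21 M)) (Cconj (m22 M)).
(* adjugate: projectively equal to the inverse *)
Definition madj (M : Mat) : Mat := mkMat (m22 M) (- m12 M) (- m21 M) (m11 M).
Definition mscal (l : C) (M : Mat) : Mat :=
  mkMat (l * m11 M) (l * m12 M) (l * m21 M) (l * m22 M).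
Definition mdet (M : Mat) : C := m11 M * m22 M - m12 M * m21 M.
Definition mtr (M : Mat) : C := m11 M + m22 M.
Definition mid : Mat := mkMat 1 0 0 1.

(** An isometry of H^3, seen as a transformation of C ∪ {∞}:
    [rev = false] : z |-> (m11 z + m12)/(m21 z + m22)   (Möbius, orientation preserving)
    [rev = true ] : z |-> (m11 zbar + m12)/(m21 zbar + m22) (anti-Möbius, reversing).
    The matrix is only meaningful up to a nonzero scalar and must have det <> 0. *)
Record Isom := mkIsom { rev : bool; mat : Mat }.

Definition valid (g : Isom) : Prop := mdet (mat g) <> 0.

Definition cj (e : bool) (M : Mat) : Mat := if e then mconj M else M.

Definition icomp (g h : Isom) : Isom :=
  mkIsom (xorb (rev g) (rev h)) (mmul (mat g) (cj (rev g) (mat h))).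
Definition iinv (g : Isom) : Isom := mkIsom (rev g) (cj (rev g) (madj (mat g))).
Definition iid : Isom := mkIsom false mid.

(* equality as transformations of C ∪ {∞} (matrices up to nonzero scalar) *)
Definition ieq (g h : Isom) : Prop :=
  rev g = rev h /\ exists l : C, l <> 0 /\ mat g = mscal l (mat h).

(** A representation rho : pi_1(K^2) = <a,b | a b a^-1 = b^-1> -> Isom(H^3),
    given (universal property of the presentation) by the images of a and b. *)
Record KRep := mkKRep { rho_a : Isom; rho_b : Isom }.

Definition is_rep (r : KRep) : Prop :=
  valid (rho_a r) /\ valid (rho_b r) /\
  ieq (icomp (icomp (rho_a r) (rho_b r)) (iinv (rho_a r))) (iinv (rho_b r)).

Definition preserves_orientation_type (r : KRep) : Prop :=
  rev (rho_a r) = true /\ rev (rho_b r) = false.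

Inductive letter := La | Lb.
Definition word := list (letter * bool).

Definition eval_letter (r : KRep) (x : letter * bool) : Isom :=
  let g := match fst x with La => rho_a r | Lb => rho_b r end in
  if snd x then iinv g else g.
Fixpoint eval (r : KRep) (w : word) : Isom :=
  match w with
  | [] => iid
  | x :: w' => icomp (eval_letter r x) (eval r w')
  end.

(** Elements of the orientation subgroup <a^2, b>: words in the letters
    a^2 (false) and b (true), each with an inversion flag, expanded into words. *)
Definition osub_word (u : list (bool * bool)) : word :=
  flat_map (fun x : bool * bool => if fst x then ((Lb, snd x) :: nil) else ((La, snd x) :: (La, snd x) :: nil)) u.

(** I(g) = (trace_{PSL(2,C)} g)^2 - 4 = tr(M)^2 / det(M) - 4 for a matrix M of g. *)
Definition Ival (g : Isom) : C := mtr (mat g) * mtr (mat g) / mdet (mat g) - 4.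
Definition I_gamma (r : KRep) (w : word) : C := Ival (eval r w).

Definition word_a2 : word :=  (La, false) :: (La, false) :: nil.
Definition word_b : word :=  (Lb, false) :: nil.

Definition Cge0 (z : C) : Prop := exists x : R, z = RtoC x /\ (0 <= x)%R.
Definition Cle0 (z : C) : Prop := exists x : R, z = RtoC x /\ (x <= 0)%R.
Definition Cgt0 (z : C) : Prop := exists x : R, z = RtoC x /\ (0 < x)%R.
Definition Clt0 (z : C) : Prop := exists x : R, z = RtoC x /\ (x < 0)%R.

Definition cexpi (t : R) : C := (cos t, sin t).

Definition conj_to (r : KRep) (A0 B0 : Isom) : Prop :=
  exists g : Isom, valid g /\
    ieq (rho_a r) (icomp (icomp g A0) (iinv g)) /\
    ieq (rho_b r) (icomp (icomp g B0) (iinv g)).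

(* A(z) = zbar + 1 *)
Definition A_par1 : Isom := mkIsom true (mkMat 1 1 0 1).
(* A(z) = zbar *)
Definition A_par0 : Isom := mkIsom true mid.
(* B(z) = z + tau i *)
Definition B_par (tau : R) : Isom := mkIsom false (mkMat 1 (RtoC tau * Ci) 0 1).

Definition parabolic (r : KRep) : Prop :=
  exists tau : R, (0 < tau)%R /\
    (conj_to r A_par1 (B_par tau) \/ conj_to r A_par0 (B_par tau)).

(* type I: A(z) = e^l zbar, B(z) = e^{alpha i} z, l >= 0, alpha in (0, pi] *)
Definition typeI (r : KRep) : Prop :=
  exists l alpha : R, (0 <= l)%R /\ (0 < alpha <= PI)%R /\
    conj_to r (mkIsom true (mkMat (RtoC (exp l)) 0 0 1))
              (mkIsom false (mkMat (cexpi alpha) 0 0 1)).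

(* type II: A(z) = e^{alpha i} / zbar, B(z) = e^l z, l > 0, alpha in [0, pi] *)
Definition typeII (r : KRep) : Prop :=
  exists l alpha : R, (0 < l)%R /\ (0 <= alpha <= PI)%R /\
    conj_to r (mkIsom true (mkMat 0 (cexpi alpha) 1 0))
              (mkIsom false (mkMat (RtoC (exp l)) 0 0 1)).

From Pilot Require Import Defs.
From Stdlib Require Import Reals Lra Psatz Classical Setoid Morphisms.
From Coquelicot Require Import Coquelicot.
Set Bullet Behavior "Strict Subproofs".
Open Scope C_scope.

(** [I] depends only on the projective class of a matrix and is invariant under similarity,
    so conjugating an orientation-preserving element by any isometry preserves it, up to
    complex conjugation when the isometry reverses orientation (harmless for real values).
    Conjugation respects composition and inversion modulo scalars, hence [I_gamma] of [r]
    equals [I_gamma] of its normal form. There the values are explicit: in the parabolic case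
    every element is a translation [z |-> z + v], so [I = 0]; in type I, [a^2] and [b] are
    [diag(e^(2l), 1)] and [diag(e^(i alpha), 1)], so [I] is [(e^l - e^(-l))^2 >= 0] and
    [2 cos alpha - 2 < 0]; in type II, [a^2 = diag(e^(i alpha), e^(-i alpha))] and
    [b = diag(e^l, 1)], so [I] is [4 cos^2 alpha - 4 <= 0] and [e^l + e^(-l) - 2 > 0]. *)

Lemma Cconj_R (x : R) : Cconj (RtoC x) = RtoC x.
Proof. unfold Cconj, RtoC; cbn; f_equal; ring. Qed.

Lemma Cconj_neq_0 (z : C) : z <> 0 -> Cconj z <> 0.
Proof. intros Hz E; apply Hz; rewrite <- (Cconj_conj z), E; apply Cconj_R. Qed.

Lemma RtoC_neq_0 (x : R) : (x <> 0)%R -> RtoC x <> 0.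
Proof. intros Hx E; apply Hx, RtoC_inj, E. Qed.

Lemma Cinv_0 : / RtoC 0 = RtoC 0.
Proof. unfold Cinv, RtoC; cbn; f_equal; unfold Rdiv; ring. Qed.

Lemma Cconj_inv (z : C) : Cconj (/ z) = / Cconj z.
Proof.
  destruct (classic (z = 0)) as [->|Hz].
  - rewrite Cconj_R, Cinv_0; apply Cconj_R.
  - exact (Cinv_conj z Hz).
Qed.

Lemma Cinv_neq_0 (z : C) : z <> 0 -> / z <> 0.
Proof. intros Hz E; apply C1_nz; rewrite <- (Cinv_l z Hz), E; ring. Qed.

Lemma Cinv_mult_l (k z : C) : k <> 0 -> / (k * z) = / k * / z.
Proof.
  intros Hk; destruct (classic (z = 0)) as [->|Hz].
  - rewrite Cmult_0_r, Cinv_0; ring.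
  - field; auto.
Qed.

Ltac Cconj_push :=
  repeat rewrite ?Cmult_conj, ?Cplus_conj, ?Cminus_conj, ?Copp_conj, ?Cconj_conj, ?Cconj_R.
Ltac mat_ring :=
  unfold icomp, iinv, iid, cj, mmul, mscal, madj, mconj, mdet, mtr, mid;
  cbn [mat Defs.rev xorb Defs.m11 Defs.m12 Defs.m21 Defs.m22];
  lazymatch goal with |- mkMat _ _ _ _ = _ => f_equal | _ => idtac end;
  Cconj_push; ring.

Lemma mscal_1 (M : Mat) : mscal 1 M = M.
Proof. destruct M; mat_ring. Qed.

Lemma mscal_mscal (l k : C) (M : Mat) : mscal l (mscal k M) = mscal (l * k) M.
Proof. destruct M; mat_ring. Qed.

Lemma mconj_involutive (M : Mat) : mconj (mconj M) = M.
Proof. destruct M; mat_ring. Qed.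

#[local] Instance ieq_Equivalence : Equivalence ieq.
Proof.
  split.
  - intros g; split; [reflexivity | exists 1; split; [exact C1_nz | symmetry; apply mscal_1]].
  - intros g h [Hr (l & Hl & E)]; split; [auto|].
    exists (/ l); split; [now apply Cinv_neq_0|].
    rewrite E, mscal_mscal, Cinv_l, mscal_1 by exact Hl; reflexivity.
  - intros g h k [Hr (l & Hl & E)] [Hr' (l' & Hl' & E')]; split; [congruence|].
    exists (l * l'); split; [now apply Cmult_neq_0|].
    rewrite E, E', mscal_mscal; reflexivity.
Qed.

#[local] Instance icomp_Proper : Proper (ieq ==> ieq ==> ieq) icomp.
Proof.
  intros [rg G] [rg' G'] [Hg (l & Hl & Eg)] [rh H] [rh' H'] [Hh (k & Hk & Eh)].
  cbn in *; subst; split; [reflexivity|]; cbn.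
  destruct rg'; [exists (l * Cconj k) | exists (l * k)];
    (split; [auto using Cmult_neq_0, Cconj_neq_0 | destruct G', H'; mat_ring]).
Qed.

#[local] Instance iinv_Proper : Proper (ieq ==> ieq) iinv.
Proof.
  intros [rg G] [rg' G'] [Hg (l & Hl & Eg)]; cbn in *; subst; split; [reflexivity|]; cbn.
  destruct rg'; [exists (Cconj l) | exists l];
    (split; [auto using Cconj_neq_0 | destruct G'; mat_ring]).
Qed.

Lemma icompA (g h k : Isom) : icomp g (icomp h k) = icomp (icomp g h) k.
Proof.
  destruct g as [[] G], h as [[] H], k as [[] K]; unfold icomp; cbn; f_equal;
    destruct G, H, K; mat_ring.
Qed.

Lemma icomp_iid_l (g : Isom) : icomp iid g = g.
Proof. destruct g as [rg G]; unfold icomp; cbn; f_equal; destruct G; mat_ring. Qed.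

Lemma icomp_iid_r (g : Isom) : icomp g iid = g.
Proof. destruct g as [[] G]; unfold icomp; cbn; f_equal; destruct G; mat_ring. Qed.

Lemma iinv_icomp (g h : Isom) : iinv (icomp g h) = icomp (iinv h) (iinv g).
Proof.
  destruct g as [[] G], h as [[] H]; unfold iinv, icomp; cbn; f_equal; destruct G, H; mat_ring.
Qed.

Lemma iinv_involutive (g : Isom) : iinv (iinv g) = g.
Proof. destruct g as [[] G]; unfold iinv; cbn; f_equal; destruct G; mat_ring. Qed.

Lemma icomp_iinv_l (g : Isom) : valid g -> ieq (icomp (iinv g) g) iid.
Proof.
  destruct g as [[] G]; unfold valid; cbn; intros Hd; split; try reflexivity;
    [exists (Cconj (mdet G)) | exists (mdet G)];
    (split; [auto using Cconj_neq_0 | destruct G; mat_ring]).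
Qed.

Lemma icomp_iinv_r (g : Isom) : valid g -> ieq (icomp g (iinv g)) iid.
Proof.
  destruct g as [[] G]; unfold valid; cbn; intros Hd; split; try reflexivity;
    exists (mdet G); (split; [exact Hd | destruct G; mat_ring]).
Qed.

Definition iconj (g h : Isom) : Isom := icomp (icomp g h) (iinv g).

#[local] Instance iconj_Proper (g : Isom) : Proper (ieq ==> ieq) (iconj g).
Proof. intros h h' Hh; unfold iconj; rewrite Hh; reflexivity. Qed.

Lemma iconj_icomp (g h k : Isom) :
  valid g -> ieq (iconj g (icomp h k)) (icomp (iconj g h) (iconj g k)).
Proof.
  intros Hg; unfold iconj; rewrite !icompA.
  rewrite <- (icompA (icomp g h) (iinv g) g), (icomp_iinv_l g Hg), icomp_iid_r.
  reflexivity.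
Qed.

Lemma iconj_iinv (g h : Isom) : iconj g (iinv h) = iinv (iconj g h).
Proof. unfold iconj; rewrite !iinv_icomp, iinv_involutive, icompA; reflexivity. Qed.

Lemma iconj_iid (g : Isom) : valid g -> ieq (iconj g iid) iid.
Proof. intros Hg; unfold iconj; rewrite icomp_iid_r; exact (icomp_iinv_r g Hg). Qed.

Lemma eval_iconj (r r0 : KRep) (g : Isom) (w : word) :
  valid g -> ieq (rho_a r) (iconj g (rho_a r0)) -> ieq (rho_b r) (iconj g (rho_b r0)) ->
  ieq (eval r w) (iconj g (eval r0 w)).
Proof.
  intros Hg Ha Hb.
  assert (Hx : forall x, ieq (eval_letter r x) (iconj g (eval_letter r0 x))).
  { intros [[] []]; cbn; rewrite ?iconj_iinv, ?Ha, ?Hb; reflexivity. }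
  induction w as [|x w IH]; cbn [eval].
  - symmetry; exact (iconj_iid g Hg).
  - rewrite (iconj_icomp g _ _ Hg), <- Hx, <- IH; reflexivity.
Qed.

(* No nondegeneracy is needed: if [mdet N = 0], both sides are [- 4] because [/ 0 = 0]. *)
Lemma Ival_invariants (b c : bool) (k : C) (M N : Mat) :
  k <> 0 -> mtr M = k * mtr N -> mdet M = k * k * mdet N ->
  Ival (mkIsom b M) = Ival (mkIsom c N).
Proof.
  intros Hk Htr Hdet; unfold Ival; cbn [mat]; rewrite Htr, Hdet.
  unfold Cdiv; rewrite Cinv_mult_l by (now apply Cmult_neq_0).
  set (d := / mdet N); field; exact Hk.
Qed.

Lemma Ival_mscal (b : bool) (l : C) (M : Mat) :
  l <> 0 -> Ival (mkIsom b (mscal l M)) = Ival (mkIsom b M).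
Proof. intros Hl; apply Ival_invariants with l; [exact Hl | |]; destruct M; mat_ring. Qed.

Lemma Ival_similar (b : bool) (G M : Mat) :
  mdet G <> 0 -> Ival (mkIsom b (mmul (mmul G M) (madj G))) = Ival (mkIsom b M).
Proof.
  intros HG; apply Ival_invariants with (mdet G); [exact HG | |]; destruct G, M; mat_ring.
Qed.

Lemma Ival_mconj (b : bool) (M : Mat) : Ival (mkIsom b (mconj M)) = Cconj (Ival (mkIsom b M)).
Proof.
  destruct M; unfold Ival, mtr, mdet, mconj, Cdiv; cbn.
  Cconj_push; rewrite Cconj_inv; Cconj_push; reflexivity.
Qed.

#[local] Instance Ival_Proper : Proper (ieq ==> eq) Ival.
Proof.
  intros [rg G] [rh H] [Hr (l & Hl & E)]; cbn in *; subst.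
  exact (Ival_mscal rh l H Hl).
Qed.

Lemma Ival_iconj (g h : Isom) :
  valid g -> Defs.rev h = false ->
  Ival (iconj g h) = if Defs.rev g then Cconj (Ival h) else Ival h.
Proof.
  destruct g as [[] G], h as [rh H]; unfold valid, iconj, icomp, iinv; cbn; intros HG ->; cbn.
  - rewrite mconj_involutive, Ival_similar, Ival_mconj by exact HG; reflexivity.
  - exact (Ival_similar false G H HG).
Qed.

Lemma I_gamma_conj_to (r r0 : KRep) (w : word) (x : R) :
  conj_to r (rho_a r0) (rho_b r0) -> Defs.rev (eval r0 w) = false ->
  I_gamma r0 w = RtoC x -> I_gamma r w = RtoC x.
Proof.
  intros (g & Hg & Ha & Hb) Hrev H0; unfold I_gamma in *.
  rewrite (eval_iconj r r0 g w Hg Ha Hb), Ival_iconj, H0 by assumption.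
  destruct (Defs.rev g); [apply Cconj_R | reflexivity].
Qed.

Lemma eval_app (r : KRep) (w1 w2 : word) :
  eval r (w1 ++ w2)%list = icomp (eval r w1) (eval r w2).
Proof.
  induction w1 as [|x w1 IH]; cbn [eval app].
  - symmetry; apply icomp_iid_l.
  - rewrite IH; apply icompA.
Qed.

Lemma rev_eval_osub_word (r : KRep) (u : list (bool * bool)) :
  preserves_orientation_type r -> Defs.rev (eval r (osub_word u)) = false.
Proof.
  intros [Ha Hb]; induction u as [|[[] []] u IH]; [reflexivity|..];
    unfold osub_word in *; cbn [List.flat_map fst snd]; rewrite eval_app; cbn;
    rewrite IH, ?Ha, ?Hb; reflexivity.
Qed.

Definition unitriangular (M : Mat) : Prop := m11 M = 1 /\ m21 M = 0 /\ m22 M = 1.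

Lemma unitriangular_mmul (M N : Mat) :
  unitriangular M -> unitriangular N -> unitriangular (mmul M N).
Proof.
  destruct M as [a b c d], N as [a' b' c' d']; unfold unitriangular; cbn;
  intros (-> & -> & ->) (-> & -> & ->); repeat split; mat_ring.
Qed.

Lemma unitriangular_cj (e : bool) (M : Mat) : unitriangular M -> unitriangular (cj e M).
Proof.
  destruct e, M as [a b c d]; unfold unitriangular; cbn; intros (-> & -> & ->);
    repeat split; mat_ring.
Qed.

Lemma unitriangular_madj (M : Mat) : unitriangular M -> unitriangular (madj M).
Proof.
  destruct M as [a b c d]; unfold unitriangular; cbn; intros (-> & -> & ->);
    repeat split; mat_ring.
Qed.

Lemma Ival_unitriangular (g : Isom) : unitriangular (mat g) -> Ival g = 0.
Proof.
  destruct g as [rg [a v c d]]; unfold unitriangular, Ival, mtr, mdet; cbn.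
  intros (-> & -> & ->).
  replace (1 * 1 - v * 0) with (RtoC 1) by ring; field; exact C1_nz.
Qed.

Lemma I_gamma_unitriangular (r : KRep) (w : word) :
  unitriangular (mat (rho_a r)) -> unitriangular (mat (rho_b r)) -> I_gamma r w = 0.
Proof.
  intros Ha Hb; apply Ival_unitriangular.
  induction w as [|[[] []] w IH]; cbn; [repeat split | ..];
    apply unitriangular_mmul; auto using unitriangular_cj, unitriangular_madj.
Qed.

Lemma eval_word_a2 (r : KRep) :
  Defs.rev (rho_a r) = true ->
  eval r word_a2 = mkIsom false (mmul (mat (rho_a r)) (mconj (mat (rho_a r)))).
Proof.
  destruct r as [[ra A] B]; cbn; intros ->; unfold icomp; cbn; f_equal; destruct A; mat_ring.
Qed.

Lemma eval_word_b (r : KRep) : eval r word_b = rho_b r.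
Proof. apply icomp_iid_r. Qed.

Lemma Ival_diag (b : bool) (z w : C) :
  z <> 0 -> w <> 0 -> Ival (mkIsom b (mkMat z 0 0 w)) = z / w + w / z - 2.
Proof. intros Hz Hw; unfold Ival, mtr, mdet; cbn; field; auto. Qed.

Lemma cexpi_mul_conj (t : R) : cexpi t * Cconj (cexpi t) = 1.
Proof.
  pose proof (sin2_cos2 t) as H; unfold Rsqr in H.
  unfold cexpi, Cconj, Cmult, RtoC; cbn; f_equal; nra.
Qed.

Lemma cexpi_add_conj (t : R) : cexpi t + Cconj (cexpi t) = RtoC (2 * cos t).
Proof. unfold cexpi, Cconj, Cplus, RtoC; cbn; f_equal; ring. Qed.

Lemma cexpi_neq_0 (t : R) : cexpi t <> 0.
Proof. intros E; apply C1_nz; rewrite <- (cexpi_mul_conj t), E; ring. Qed.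

Lemma Cinv_cexpi (t : R) : / cexpi t = Cconj (cexpi t).
Proof.
  rewrite <- (Cmult_1_l (/ cexpi t)), <- (cexpi_mul_conj t); field; apply cexpi_neq_0.
Qed.

Definition typeI_model (l alpha : R) : KRep :=
  mkKRep (mkIsom true (mkMat (RtoC (exp l)) 0 0 1)) (mkIsom false (mkMat (cexpi alpha) 0 0 1)).

Definition typeII_model (l alpha : R) : KRep :=
  mkKRep (mkIsom true (mkMat 0 (cexpi alpha) 1 0)) (mkIsom false (mkMat (RtoC (exp l)) 0 0 1)).

Lemma I_a2_typeI_model (l alpha : R) :
  I_gamma (typeI_model l alpha) word_a2 = RtoC ((exp l - / exp l) ^ 2).
Proof.
  unfold I_gamma; rewrite eval_word_a2 by reflexivity; cbn [typeI_model rho_a mat].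
  assert (HE : RtoC (exp l) <> 0) by (apply RtoC_neq_0, Rgt_not_eq, exp_pos).
  assert (Hm : mmul (mkMat (exp l) 0 0 1) (mconj (mkMat (exp l) 0 0 1))
               = mkMat (exp l * exp l) 0 0 1) by mat_ring.
  rewrite Hm, Ival_diag by auto using Cmult_neq_0, C1_nz.
  rewrite RtoC_pow, RtoC_minus, RtoC_inv by apply Rgt_not_eq, exp_pos.
  field; exact HE.
Qed.

Lemma I_b_typeI_model (l alpha : R) :
  I_gamma (typeI_model l alpha) word_b = RtoC (2 * cos alpha - 2).
Proof.
  unfold I_gamma; rewrite eval_word_b; cbn [typeI_model rho_b].
  rewrite Ival_diag by auto using cexpi_neq_0, C1_nz.
  transitivity (cexpi alpha + Cconj (cexpi alpha) - 2).
  - rewrite <- Cinv_cexpi; field; apply cexpi_neq_0.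
  - rewrite cexpi_add_conj, RtoC_minus; reflexivity.
Qed.

Lemma I_a2_typeII_model (l alpha : R) :
  I_gamma (typeII_model l alpha) word_a2 = RtoC ((2 * cos alpha) ^ 2 - 4).
Proof.
  unfold I_gamma; rewrite eval_word_a2 by reflexivity; cbn [typeII_model rho_a mat].
  set (w := cexpi alpha).
  assert (Hw : w <> 0) by apply cexpi_neq_0.
  assert (Hm : mmul (mkMat 0 w 1 0) (mconj (mkMat 0 w 1 0)) = mkMat w 0 0 (Cconj w)) by mat_ring.
  rewrite Hm, Ival_diag by auto using Cconj_neq_0.
  transitivity ((w + Cconj w) ^ 2 - 2 * (w * Cconj w) - 2).
  - unfold Cdiv, w; rewrite <- Cconj_inv, Cinv_cexpi, Cconj_conj; ring.
  - unfold w; rewrite cexpi_add_conj, cexpi_mul_conj, RtoC_minus, RtoC_pow; ring.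
Qed.

Lemma I_b_typeII_model (l alpha : R) :
  I_gamma (typeII_model l alpha) word_b = RtoC (exp l + / exp l - 2).
Proof.
  unfold I_gamma; rewrite eval_word_b; cbn [typeII_model rho_b].
  assert (HE : (exp l <> 0)%R) by apply Rgt_not_eq, exp_pos.
  rewrite Ival_diag by auto using RtoC_neq_0, C1_nz.
  rewrite RtoC_minus, RtoC_plus, RtoC_inv by exact HE.
  field; apply RtoC_neq_0, HE.
Qed.

Lemma cos_lt_1 (t : R) : (0 < t <= PI)%R -> (cos t < 1)%R.
Proof.
  intros [Ht HtPI]; rewrite <- cos_0.
  apply cos_decreasing_1; pose proof PI_RGT_0; lra.
Qed.

Lemma Rplus_inv_gt_2 (x : R) : (1 < x)%R -> (2 < x + / x)%R.
Proof.
  intros Hx.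
  assert (E : (x + / x - 2 = (x - 1) ^ 2 / x)%R) by (field; lra).
  assert (0 < (x - 1) ^ 2 / x)%R by (apply Rdiv_lt_0_compat; [apply pow_lt|]; lra).
  lra.
Qed.

Theorem lemma4p5 (r : KRep) :
  is_rep r -> preserves_orientation_type r -> ~ ieq (rho_b r) iid ->
  (parabolic r -> forall u : list (bool * bool), I_gamma r (osub_word u) = RtoC 0) /\
  (typeI r -> Cge0 (I_gamma r word_a2) /\ Clt0 (I_gamma r word_b)) /\
  (typeII r -> Cle0 (I_gamma r word_a2) /\ Cgt0 (I_gamma r word_b)).
Proof.
  intros _ _ _; split; [|split].
  - intros (tau & _ & [Hc | Hc]) u;
      [apply (I_gamma_conj_to r (mkKRep A_par1 (B_par tau)))
      | apply (I_gamma_conj_to r (mkKRep A_par0 (B_par tau)))];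
      solve [exact Hc | apply rev_eval_osub_word; split; reflexivity
            | apply I_gamma_unitriangular; repeat split].
  - intros (l & alpha & _ & Halpha & Hc); split.
    + exists ((exp l - / exp l) ^ 2)%R; split; [|apply pow2_ge_0].
      apply (I_gamma_conj_to r (typeI_model l alpha));
        [exact Hc | reflexivity | apply I_a2_typeI_model].
    + exists (2 * cos alpha - 2)%R; split; [|pose proof (cos_lt_1 alpha Halpha); lra].
      apply (I_gamma_conj_to r (typeI_model l alpha));
        [exact Hc | reflexivity | apply I_b_typeI_model].
  - intros (l & alpha & Hl & _ & Hc); split.
    + exists ((2 * cos alpha) ^ 2 - 4)%R; split; [|pose proof (COS_bound alpha); nra].
      apply (I_gamma_conj_to r (typeII_model l alpha));
        [exact Hc | reflexivity | apply I_a2_typeII_model].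
    + exists (exp l + / exp l - 2)%R; split.
      * apply (I_gamma_conj_to r (typeII_model l alpha));
          [exact Hc | reflexivity | apply I_b_typeII_model].
      * assert (HE : (1 < exp l)%R) by (rewrite <- exp_0; apply exp_increasing, Hl).
        pose proof (Rplus_inv_gt_2 (exp l) HE); lra.
Qed.
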